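(* Let $D\in\mathbb{R}^{n\times n}$, $\lambda,\mu>0$, positive integers $k_0\le n$ and $k_1\le n^2$, and let $\mathcal I_0\subset[n]\times[n]$ with $|\mathcal I_0|=n^2-k_1$. Let $S^\star\in\{0,1\}^{n\times n}$ be given by $S^\star_{ij}=0\iff(i,j)\in\mathcal I_0$. Define $$g(X)=\Big\|D-X-S^\star\circ\tfrac{D-X}{1+\mu}\Big\|_F^2+\lambda\|X\|_F^2+\mu\Big\|S^\star\circ\tfrac{D-X}{1+\mu}\Big\|_F^2 .$$ Consider the alternating minimization with fixed sparsity pattern: $X_0=0$ and for $t\ge0$, $Y_{t+1}=S^\star\circ\frac{D-X_t}{1+\mu}$ (the minimizer of $f(X_t,\cdot)$ over $Y$ with $Y_{ij}=0$ for $(i,j)\in\mathcal I_0$) and $X_{t+1}\in\arg\min_{\mathrm{Rank}(X)\le k_0}f(X,Y_{t+1})$, where $f(X,Y)=\|D-X-Y\|_F^2+\lambda\|X\|_F^2+\mu\|Y\|_F^2$. Then this procedure is equivalent to projected gradient descent $X_{t+1}=\mathcal P_\Omega\big(X_t-\eta\nabla g(X_t)\big)$ on $g$ over $\Omega$ started at $X_0=0$ with step size $\eta=\frac{1}{2(1+\lambda)}$: the two methods produce the same sequence of low-rank iterates $X_t$ (with the same choice of projection in case of non-uniqueness), and $f(X_t,Y_t)=g(X_t)$ for all iterations $t\ge1$.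
   Context: $\circ$ is the Hadamard product, $\|\cdot\|_F$ the Frobenius norm, $\Omega=\{X\in\mathbb{R}^{n\times n}:\mathrm{Rank}(X)\le k_0\}$, and $\mathcal P_\Omega(A)\in\arg\min_{X\in\Omega}\|A-X\|_F^2$ is the (Euclidean) projection onto $\Omega$, given by a top-$k_0$ truncated singular value decomposition of $A$. *)

From HB Require Import structures.
From mathcomp Require Import all_boot all_order all_algebra.
From mathcomp Require Import all_classical all_reals all_analysis.
Set Implicit Arguments. Unset Strict Implicit. Unset Printing Implicit Defensive.
Import Order.TTheory GRing.Theory Num.Theory.
Local Open Scope ring_scope.

Definition frob2 {R : realType} {n : nat} (A : 'M[R]_n) : R :=
  \sum_(i < n) \sum_(j < n) A i j ^+ 2.

Definition hadamard {R : realType} {n : nat} (A B : 'M[R]_n) : 'M[R]_n :=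
  \matrix_(i, j) (A i j * B i j).

Definition low_rank {R : realType} {n : nat} (k0 : nat) (X : 'M[R]_n) : Prop :=
  (\rank X <= k0)%N.

Definition is_argmin {T : Type} {d} {R' : porderType d}
  (C : T -> Prop) (h : T -> R') (Z : T) : Prop :=
  C Z /\ forall W, C W -> (h Z <= h W)%O.

Definition grad {R : realType} {n : nat} (h : 'M[R]_n -> R) (X : 'M[R]_n)
  : 'M[R]_n := \matrix_(i, j) derive h X (delta_mx i j : 'M[R]_n).

Definition Sstar {R : realType} {n : nat} (I0 : {set 'I_n * 'I_n}) : 'M[R]_n :=
  \matrix_(i, j) (if (i, j) \in I0 then 0 else 1).

Definition fobj {R : realType} {n : nat} (D : 'M[R]_n) (lam mu : R)
  (X Y : 'M[R]_n) : R :=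
  frob2 (D - X - Y) + lam * frob2 X + mu * frob2 Y.

Definition Yopt {R : realType} {n : nat} (D : 'M[R]_n) (mu : R)
  (I0 : {set 'I_n * 'I_n}) (X : 'M[R]_n) : 'M[R]_n :=
  hadamard (Sstar I0) ((1 + mu)^-1 *: (D - X)).

Definition gobj {R : realType} {n : nat} (D : 'M[R]_n) (lam mu : R)
  (I0 : {set 'I_n * 'I_n}) (X : 'M[R]_n) : R :=
  frob2 (D - X - hadamard (Sstar I0) ((1 + mu)^-1 *: (D - X)))
  + lam * frob2 X
  + mu * frob2 (hadamard (Sstar I0) ((1 + mu)^-1 *: (D - X))).

From HB Require Import structures.
From mathcomp Require Import all_boot all_order all_algebra.
From mathcomp Require Import all_classical all_reals all_analysis.
From mathcomp Require Import ring.
Import Order.TTheory GRing.Theory Num.Theory.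
Import numFieldNormedType.Exports.
Local Open Scope ring_scope.

(* The Y-update is the minimizer Y(X) = S* o (D - X)/(1 + mu) of f(X, .), and
   g(X) = f(X, Y(X)).  Completing the square in X, f(., Y) equals
   (1 + lam) ||(D - Y)/(1 + lam) - .||_F^2 plus a constant, so the X-update is
   the projection of (D - Y)/(1 + lam) onto Omega.  On the other hand, since S*
   is a 0/1 pattern, g is the separable weighted ridge objective
   sum_ij (w_ij (D_ij - X_ij)^2 + lam X_ij^2) with w = 1 - S*/(1 + mu), whose
   gradient step of length 1/(2(1 + lam)) lands exactly on (D - Y(X))/(1 + lam). *)

Lemma is_argmin_scale_shift (T : Type) (R : numDomainType) (C : T -> Prop)
    (h1 h2 : T -> R) (c K : R) (Z : T) :
  0 < c -> (forall W, h1 W = c * h2 W + K) ->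
  is_argmin C h1 Z <-> is_argmin C h2 Z.
Proof.
move=> c_gt0 h1E; split=> -[CZ Zmin]; split=> // W CW; have := Zmin W CW;
  by rewrite !h1E lerD2r ler_pM2l.
Qed.

Lemma derive_weighted_ridge (R : realType) (w c d x : R) :
  derive (fun y : R => w * (d - y) ^+ 2 + c * y ^+ 2) x 1
  = 2 * (c * x - w * (d - x)).
Proof. by rewrite derive_val /GRing.scale /=; ring. Qed.

Section Entrywise.
Variables (R : realType) (m n : nat).

Lemma frob2_complete_square (c : R) (A Z : 'M[R]_n) : 1 + c != 0 ->
  frob2 (A - Z) + c * frob2 Z
  = (1 + c) * frob2 ((1 + c)^-1 *: A - Z) + c / (1 + c) * frob2 A.
Proof.
move=> c1_neq0; rewrite /frob2 !mulr_sumr -!big_split /=; apply: eq_bigr => i _.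
rewrite !mulr_sumr -!big_split /=; apply: eq_bigr => j _.
by rewrite !mxE; field.
Qed.

(* The difference quotients coincide exactly, so no differentiability of F is
   needed. *)
Lemma derive_sum_entries (F : 'I_m -> 'I_n -> R -> R) (X : 'M[R]_(m, n)) i j :
  derive (fun Y : 'M[R]_(m, n) => \sum_k \sum_l F k l (Y k l)) X (delta_mx i j)
  = derive (F i j) (X i j) 1.
Proof.
rewrite /derive; congr lim; f_equal; apply/funext => t /=; congr (_ *: _).
rewrite -sumrB (bigD1 i) //= [X in _ + X]big1 ?addr0 => [|k /negbTE ki]; last first.
  by rewrite -sumrB big1 // => l _; rewrite !mxE ki mulr0 add0r subrr.
rewrite -sumrB (bigD1 j) //= [X in _ + X]big1 ?addr0 => [|l /negbTE lj]; last first.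
  by rewrite !mxE lj andbF mulr0 add0r subrr.
by rewrite !mxE !eqxx mulr1 [t *: 1]mulr1 addrC.
Qed.

End Entrywise.

Section SparseLowRank.
Variables (R : realType) (n : nat) (D : 'M[R]_n) (lam mu : R).
Variable I0 : {set 'I_n * 'I_n}.
Hypotheses (lam_ge0 : 0 <= lam) (mu_ge0 : 0 <= mu).

Let lam1_gt0 : 0 < 1 + lam. Proof. by rewrite ltr_wpDr. Qed.
Let lam1_neq0 : 1 + lam != 0. Proof. by rewrite gt_eqF. Qed.
Let mu1_neq0 : 1 + mu != 0. Proof. by rewrite gt_eqF // ltr_wpDr. Qed.

Let weight i j : R := 1 - Sstar I0 i j / (1 + mu).

Lemma gobj_weighted_ridge X : gobj D lam mu I0 X =
  \sum_i \sum_j (weight i j * (D i j - X i j) ^+ 2 + lam * X i j ^+ 2).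
Proof.
rewrite /gobj /frob2 !mulr_sumr -!big_split /=; apply: eq_bigr => i _.
rewrite !mulr_sumr -!big_split /=; apply: eq_bigr => j _.
by rewrite /hadamard /weight /Sstar !mxE; case: ifP => _; field.
Qed.

Lemma grad_gobj X : grad (gobj D lam mu I0) X =
  \matrix_(i, j) (2 * (lam * X i j - weight i j * (D i j - X i j))).
Proof.
pose F k l (y : R) := weight k l * (D k l - y) ^+ 2 + lam * y ^+ 2.
have -> : gobj D lam mu I0 = fun Y => \sum_i \sum_j F i j (Y i j).
  by apply/funext => Y; rewrite gobj_weighted_ridge.
apply/matrixP => i j; rewrite !mxE derive_sum_entries.
exact: derive_weighted_ridge.
Qed.

Lemma gobj_gradient_step X :
  X - (2 * (1 + lam))^-1 *: grad (gobj D lam mu I0) X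
  = (1 + lam)^-1 *: (D - Yopt D mu I0 X).
Proof.
apply/matrixP => i j; rewrite grad_gobj /Yopt /hadamard /weight !mxE.
by field; rewrite lam1_neq0 mu1_neq0.
Qed.

Lemma fobj_complete_square Z Y : fobj D lam mu Z Y =
  (1 + lam) * frob2 ((1 + lam)^-1 *: (D - Y) - Z)
  + (lam / (1 + lam) * frob2 (D - Y) + mu * frob2 Y).
Proof.
by rewrite /fobj [D - Z - Y]addrAC frob2_complete_square // addrA.
Qed.

Lemma is_argmin_fobj_gradient_step (C : 'M[R]_n -> Prop) X Z :
  is_argmin C (fun W => fobj D lam mu W (Yopt D mu I0 X)) Z <->
  is_argmin C (fun W =>
    frob2 (X - (2 * (1 + lam))^-1 *: grad (gobj D lam mu I0) X - W)) Z.
Proof.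
rewrite gobj_gradient_step.
apply: (@is_argmin_scale_shift _ _ _ _ _ (1 + lam)) => // W.
exact: fobj_complete_square.
Qed.

End SparseLowRank.

Theorem proposition9 (R : realType) (n : nat) (D : 'M[R]_n) (lam mu : R)
  (k0 k1 : nat) (I0 : {set 'I_n * 'I_n}) :
  0 < lam -> 0 < mu ->
  (0 < k0)%N -> (k0 <= n)%N -> (0 < k1)%N -> (k1 <= n ^ 2)%N ->
  #|I0| = (n ^ 2 - k1)%N ->
  forall (X Y : nat -> 'M[R]_n),
    X 0%N = 0 ->
    (forall t, Y t.+1 = Yopt D mu I0 (X t)) ->
    ((forall t, is_argmin (low_rank k0) (fun Z => fobj D lam mu Z (Y t.+1))
                          (X t.+1))
     <->
     (forall t, is_argmin (low_rank k0)
                  (fun Z => frob2 (X t - (2 * (1 + lam))^-1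
                                      *: grad (gobj D lam mu I0) (X t) - Z))
                  (X t.+1)))
    /\
    ((forall t, is_argmin (low_rank k0) (fun Z => fobj D lam mu Z (Y t.+1))
                          (X t.+1)) ->
     forall t, fobj D lam mu (X t) (Y t.+1) = gobj D lam mu I0 (X t)).
Proof.
move=> lam_gt0 mu_gt0 _ _ _ _ _ X Y _ YE.
have argmin_step t := @is_argmin_fobj_gradient_step R n D lam mu I0
  (ltW lam_gt0) (ltW mu_gt0) (low_rank k0) (X t) (X t.+1).
split; last by move=> _ t; rewrite YE.
split=> argminX t.
- by apply/argmin_step; rewrite -YE; exact: argminX.
- by rewrite YE; apply/argmin_step; exact: argminX.
Qed.
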